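(* Let $A,B,C$ share a tripartite quantum state $\rho$ and let each party have two dichotomic observables $A_1,A_2$, $B_1,B_2$, $C_1,C_2$ with eigenvalues $\pm1$. For $\alpha\ge1$ define $$\widetilde{I}^{\alpha}_{AB}=\alpha(\langle A_1B_1\rangle+\langle A_1B_2\rangle)+\langle A_2B_1\rangle-\langle A_2B_2\rangle,$$ and $\widetilde{I}^{\alpha}_{AC}$ analogously with $B$ replaced by $C$, where $\langle XY\rangle=\mathrm{Tr}[\rho\,(X\otimes Y)]$ (identity on the remaining party). Then for every $\alpha\ge1$, $$\alpha^2\max\{(\widetilde{I}^{\alpha}_{AB})^2,(\widetilde{I}^{\alpha}_{AC})^2\}+\min\{(\widetilde{I}^{\alpha}_{AB})^2,(\widetilde{I}^{\alpha}_{AC})^2\}\le 4\alpha^2(1+\alpha^2)$$ and $$(\widetilde{I}^{\alpha}_{AB})^2+4\langle A_iC_j\rangle^2\le 4(1+\alpha^2)\quad\text{for all } i,j\in\{1,2\}.$$ *)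

(* finite-dimensional quantum mechanics over a numeric closed
   field C (e.g. the complex numbers). *)
From HB Require Import structures.
From mathcomp Require Import all_boot all_order all_algebra.
From mathcomp Require Import mxtens.

Set Implicit Arguments.
Unset Strict Implicit.
Unset Printing Implicit Defensive.

Import Order.TTheory GRing.Theory Num.Theory.
Local Open Scope ring_scope.

Definition adjmx (C : numClosedFieldType) m n (M : 'M[C]_(m, n)) : 'M[C]_(n, m) :=
  map_mx Num.conj (trmx M).

Definition hermitian (C : numClosedFieldType) n (M : 'M[C]_n) : Prop :=
  adjmx M = M.

Definition psd (C : numClosedFieldType) n (M : 'M[C]_n) : Prop :=
  forall v : 'cV[C]_n, 0 <= (adjmx v *m M *m v) 0 0.

Definition density (C : numClosedFieldType) n (rho : 'M[C]_n) : Prop :=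
  [/\ hermitian rho, psd rho & \tr rho = 1].

Definition dichotomic (C : numClosedFieldType) n (X : 'M[C]_n) : Prop :=
  hermitian X /\ (forall a : C, eigenvalue X a -> a = 1 \/ a = -1).

(* tripartite Hilbert space ordered A (x) B (x) C *)
Definition corrAB (C : numClosedFieldType) dA dB dC
  (rho : 'M[C]_(dA * dB * dC)) (X : 'M[C]_dA) (Y : 'M[C]_dB) : C :=
  \tr (rho *m ((X *t Y) *t (1%:M : 'M[C]_dC))).

Definition corrAC (C : numClosedFieldType) dA dB dC
  (rho : 'M[C]_(dA * dB * dC)) (X : 'M[C]_dA) (Z : 'M[C]_dC) : C :=
  \tr (rho *m ((X *t (1%:M : 'M[C]_dB)) *t Z)).

Definition Itilde (C : numClosedFieldType) (alpha e11 e12 e21 e22 : C) : C :=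
  alpha * (e11 + e12) + e21 - e22.

From Pilot Require Import Defs.
From HB Require Import structures.
From mathcomp Require Import all_boot all_order all_algebra.
From mathcomp Require Import mxtens ring.
Set Implicit Arguments.
Unset Strict Implicit.
Unset Printing Implicit Defensive.

Import Order.TTheory GRing.Theory Num.Theory.
Local Open Scope ring_scope.

(* Every bound is an instance of one operator inequality.  Let a1, a2 be
   Hermitian involutions and P, M, G1, G2 Hermitian operators commuting with
   them, such that M anticommutes with P, G2 anticommutes with G1, and the G's
   commute with P and M.  For p >= 1 the Bell-type operator
   Z = p a1 (P + G1) + a2 (M + G2) satisfies
     <Z>^2 <= <Z^2> <= (1 + p^2) (<P^2> + <M^2> + p^2 <G1^2> + <G2^2>),
   the second step because the difference is an explicit sum of expectations
   of positive operators Q^* Q.  With P, M = c (x1 +- x2) and G1, G2 =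
   d (y1 +- y2) for two pairs of commuting dichotomic observables, <Z> is
   c I_x + d I_y.  Choosing the weights c, d proportional to the quantities to
   be bounded turns <Z> into the left-hand side X of the claimed inequality and
   the right-hand side into K X, so X^2 <= K X and X <= K.  The monogamy bound
   takes (x, y) = (B, C); the correlator bounds take y = (C_j, C_j) or
   (C_j, -C_j), for which G2 resp. G1 vanishes. *)

Section Adjoint.
Variable C : numClosedFieldType.

Lemma adjmxD m n (A B : 'M[C]_(m, n)) : adjmx (A + B) = adjmx A + adjmx B.
Proof. by apply/matrixP=> i j; rewrite !mxE rmorphD. Qed.

Lemma adjmxN m n (A : 'M[C]_(m, n)) : adjmx (- A) = - adjmx A.
Proof. by apply/matrixP=> i j; rewrite !mxE rmorphN. Qed.

Lemma adjmxZ m n (k : C) (A : 'M[C]_(m, n)) : adjmx (k *: A) = k^* *: adjmx A.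
Proof. by apply/matrixP=> i j; rewrite !mxE rmorphM. Qed.

Lemma adjmxM m n p (A : 'M[C]_(m, n)) (B : 'M[C]_(n, p)) :
  adjmx (A *m B) = adjmx B *m adjmx A.
Proof. by rewrite /adjmx trmx_mul map_mxM. Qed.

Lemma adjmxK m n (A : 'M[C]_(m, n)) : adjmx (adjmx A) = A.
Proof. exact: trmxCK. Qed.

Lemma adjmx1 n : adjmx (1%:M : 'M[C]_n) = 1%:M.
Proof. by rewrite /adjmx trmx1 map_mx1. Qed.

Lemma adjmx_tens m n p q (A : 'M[C]_(m, n)) (B : 'M[C]_(p, q)) :
  adjmx (A *t B) = adjmx A *t adjmx B.
Proof. by rewrite /adjmx trmx_tens map_mxT. Qed.

Lemma mxtrace_adjmx n (A : 'M[C]_n) : \tr (adjmx A) = (\tr A)^*.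
Proof. by rewrite /mxtrace rmorph_sum; apply: eq_bigr => i _; rewrite !mxE. Qed.

Lemma hermitian1 n : Defs.hermitian (1%:M : 'M[C]_n).
Proof. exact: adjmx1. Qed.

Lemma hermitianD n (X Y : 'M[C]_n) :
  Defs.hermitian X -> Defs.hermitian Y -> Defs.hermitian (X + Y).
Proof. by move=> hX hY; rewrite /Defs.hermitian adjmxD hX hY. Qed.

Lemma hermitianN n (X : 'M[C]_n) : Defs.hermitian X -> Defs.hermitian (- X).
Proof. by move=> hX; rewrite /Defs.hermitian adjmxN hX. Qed.

Lemma hermitianB n (X Y : 'M[C]_n) :
  Defs.hermitian X -> Defs.hermitian Y -> Defs.hermitian (X - Y).
Proof. by move=> hX hY; apply: hermitianD => //; apply: hermitianN. Qed.

Lemma hermitianZ n (k : C) (X : 'M[C]_n) :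
  k \is Num.real -> Defs.hermitian X -> Defs.hermitian (k *: X).
Proof. by move=> kR hX; rewrite /Defs.hermitian adjmxZ conj_Creal // hX. Qed.

Lemma hermitianM n (X Y : 'M[C]_n) :
  Defs.hermitian X -> Defs.hermitian Y -> comm_mx X Y -> Defs.hermitian (X *m Y).
Proof. by move=> hX hY cXY; rewrite /Defs.hermitian adjmxM hX hY. Qed.

Lemma hermitian_tens m n (X : 'M[C]_m) (Y : 'M[C]_n) :
  Defs.hermitian X -> Defs.hermitian Y -> Defs.hermitian (X *t Y).
Proof. by move=> hX hY; rewrite /Defs.hermitian adjmx_tens hX hY. Qed.

End Adjoint.

Lemma tensmx11 (R : comPzRingType) m n :
  (1%:M : 'M[R]_m) *t (1%:M : 'M[R]_n) = 1%:M.
Proof.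
apply/matrixP=> i j.
case: (mxtens_indexP i) => i0 i1; case: (mxtens_indexP j) => j0 j1.
rewrite tensmxE !mxE (inj_eq (can_inj (@mxtens_indexK m n))) xpair_eqE.
by case: (i0 == j0); case: (i1 == j1); rewrite ?mulr1 ?mul0r ?mulr0.
Qed.

Lemma tensmx_involutive (R : comPzRingType) m n (X : 'M[R]_m) (Y : 'M[R]_n) :
  X *m X = 1%:M -> Y *m Y = 1%:M -> (X *t Y) *m (X *t Y) = 1%:M.
Proof. by move=> X2 Y2; rewrite tensmx_mul X2 Y2 tensmx11. Qed.

Lemma comm_mxZ (R : comPzRingType) n (k : R) (X Y : 'M[R]_n) :
  comm_mx X Y -> comm_mx X (k *: Y).
Proof. by move=> cXY; rewrite /comm_mx -scalemxAr cXY scalemxAl. Qed.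

Ltac solve_comm_mx :=
  let split_comm := repeat first
    [ apply: comm_mxZ | apply: comm_mxB | apply: comm_mxD | apply: comm_mxN
    | apply: comm_mx0 | apply: comm_mx_refl ] in
  split_comm; try (apply: comm_mx_sym; split_comm);
  solve [ assumption | apply: comm_mx_sym; assumption ].

Lemma anticomm_sum_diff (R : comPzRingType) n (X Y : 'M[R]_n) :
  X *m X = 1%:M -> Y *m Y = 1%:M ->
  (X - Y) *m (X + Y) = - ((X + Y) *m (X - Y)).
Proof.
move=> X2 Y2.
have -> : (X - Y) *m (X + Y) = X *m Y - Y *m X.
  by rewrite mulmxBl !mulmxDr X2 Y2 [Y *m X + _]addrC opprD addrACA subrr add0r.
have -> : (X + Y) *m (X - Y) = Y *m X - X *m Y.
  by rewrite mulmxDl !mulmxBr X2 Y2 addrC addrA subrK.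
by rewrite opprB.
Qed.

Lemma anticommZ (R : comPzRingType) n (k l : R) (X Y : 'M[R]_n) :
  X *m Y = - (Y *m X) -> (k *: X) *m (l *: Y) = - ((l *: Y) *m (k *: X)).
Proof.
move=> aXY.
by rewrite -!scalemxAl -!scalemxAr !scalerA aXY scalerN mulrC.
Qed.

Lemma dichotomic_involutive (C : numClosedFieldType) n (X : 'M[C]_n) :
  dichotomic X -> X *m X = 1%:M.
Proof.
case=> hX eigX.
(* By the spectral theorem X = U^-1 diag(d) U, and every d_i is an eigenvalue. *)
have nX : X \is normalmx by apply/normalmxP; rewrite -[(X ^t*)%sesqui]/(adjmx X) hX.
have eX := orthomx_spectralP nX.
set U := spectralmx X in eX; set d := spectral_diag X in eX.
have Uu : U \in unitmx by apply: spectral_unit.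
have d2 i : d 0 i * d 0 i = 1.
  have : eigenvalue X (d 0 i).
    apply/eigenvalueP; exists ('e_i *m U).
      by rewrite {1}eX !mulmxA mulmxK // -[in LHS]rowE row_diag_mx -scalemxAl.
    rewrite mulmx_free_eq0 ?row_free_unit //.
    apply/eqP => /matrixP/(_ 0 i); rewrite !mxE !eqxx /= => /eqP.
    by rewrite oner_eq0.
  by case/eigX => ->; rewrite ?mulr1 ?mulrNN ?mulr1.
have dd : diag_mx d *m diag_mx d = 1%:M.
  apply/matrixP=> i j; rewrite mul_diag_mx !mxE.
  by case: eqP => [->|_]; rewrite ?mulr1n ?mulr0n ?mulr0 ?d2.
rewrite eX -!mulmxA (mulmxA U) mulmxV // mul1mx (mulmxA (diag_mx d)) dd mul1mx.
by rewrite mulVmx.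
Qed.

Lemma ler_of_sqr_le_mul (R : numDomainType) (x k : R) :
  0 <= x -> 0 <= k -> x ^+ 2 <= k * x -> x <= k.
Proof.
move=> x_ge0 k_ge0; have [->|x_neq0] := eqVneq x 0; first by [].
have x_gt0 : 0 < x by rewrite lt_def x_neq0 x_ge0.
by rewrite expr2 ler_pM2r.
Qed.

Section Expectation.
Variables (C : numClosedFieldType) (N : nat) (rho : 'M[C]_N).
Hypothesis rho_density : density rho.

Definition expect (X : 'M[C]_N) := \tr (rho *m X).

Lemma expectD X Y : expect (X + Y) = expect X + expect Y.
Proof. by rewrite /expect mulmxDr mxtraceD. Qed.

Lemma expectN X : expect (- X) = - expect X.
Proof. by rewrite /expect mulmxN linearN. Qed.

Lemma expectZ k X : expect (k *: X) = k * expect X.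
Proof. by rewrite /expect -scalemxAr mxtraceZ. Qed.

Lemma expect0 : expect 0 = 0.
Proof. by rewrite /expect mulmx0 mxtrace0. Qed.

Lemma expect1 : expect 1%:M = 1.
Proof. by case: rho_density => _ _ tr1; rewrite /expect mulmx1. Qed.

Lemma conj_expect X : (expect X)^* = expect (adjmx X).
Proof.
case: rho_density => h_rho _ _.
by rewrite /expect -mxtrace_adjmx adjmxM h_rho mxtrace_mulC.
Qed.

Lemma expect_real X : Defs.hermitian X -> expect X \is Num.real.
Proof. by move=> hX; apply/CrealP; rewrite conj_expect hX. Qed.

(* Tr[rho X^* X] = Tr[X rho X^*] is a sum of values <x, rho x> at the conjugated
   rows x of X. *)
Lemma expect_adjmx_mul_ge0 (X : 'M[C]_N) : 0 <= expect (adjmx X *m X).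
Proof.
case: rho_density => _ psd_rho _.
rewrite /expect mulmxA mxtrace_mulC mulmxA /mxtrace.
apply: sumr_ge0 => i _.
have -> : (X *m rho *m adjmx X) i i =
    (adjmx (adjmx (row i X)) *m rho *m adjmx (row i X)) 0 0.
  rewrite adjmxK !mxE; apply: eq_bigr => k _.
  by rewrite !mxE; congr (_ * _); apply: eq_bigr => l _; rewrite !mxE.
exact: psd_rho.
Qed.

Lemma expect_sqr_ge0 X : Defs.hermitian X -> 0 <= expect (X *m X).
Proof. by move=> hX; have := expect_adjmx_mul_ge0 X; rewrite hX. Qed.

(* Nonnegativity of the variance: expand <(Z - <Z>)^2> >= 0. *)
Lemma expect_sqr_le Z : Defs.hermitian Z -> expect Z ^+ 2 <= expect (Z *m Z).
Proof.
move=> hZ; set e := expect Z.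
have e_real : e \is Num.real by apply: expect_real.
have := expect_adjmx_mul_ge0 (Z - e *: 1%:M).
rewrite adjmxD adjmxN adjmxZ adjmx1 hZ (conj_Creal e_real).
rewrite mulmxDl !mulmxDr !expectD !mulNmx !mulmxN !expectN.
rewrite -!scalemxAl -!scalemxAr !expectZ !mul1mx !mulmx1 expect1 -/e.
move=> var_ge0; rewrite -subr_ge0; apply: le_trans var_ge0 _.
by rewrite le_eqVlt; apply/orP; left; apply/eqP; ring.
Qed.

Lemma expect_sum_diff_sqr (X Y : 'M[C]_N) :
  X *m X = 1%:M -> Y *m Y = 1%:M ->
  expect ((X + Y) *m (X + Y)) + expect ((X - Y) *m (X - Y)) = 4.
Proof.
move=> X2 Y2; rewrite !(mulmxDl, mulmxDr, mulNmx, mulmxN) X2 Y2.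
by rewrite !(expectD, expectN) expect1; ring.
Qed.

End Expectation.

Definition bell_op (C : numClosedFieldType) n (p : C) (a1 a2 P M : 'M[C]_n) :=
  p *: (a1 *m P) + a2 *m M.

Section BellOperator.
Variables (C : numClosedFieldType) (N : nat) (p : C) (a1 a2 : 'M[C]_N).

Lemma bell_opD P M G1 G2 :
  bell_op p a1 a2 (P + G1) (M + G2) = bell_op p a1 a2 P M + bell_op p a1 a2 G1 G2.
Proof. by rewrite /bell_op !mulmxDr scalerDr addrACA. Qed.

Lemma bell_opZ k P M : bell_op p a1 a2 (k *: P) (k *: M) = k *: bell_op p a1 a2 P M.
Proof. by rewrite /bell_op -!scalemxAr scalerDr !scalerA mulrC. Qed.

Lemma hermitian_bell_op P M :
  p \is Num.real -> Defs.hermitian a1 -> Defs.hermitian a2 ->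
  Defs.hermitian P -> Defs.hermitian M -> comm_mx P a1 -> comm_mx M a2 ->
  Defs.hermitian (bell_op p a1 a2 P M).
Proof.
move=> pR ha1 ha2 hP hM cPa1 cMa2.
apply: hermitianD; first apply: hermitianZ => //.
  by apply: hermitianM => //; apply: comm_mx_sym.
by apply: hermitianM => //; apply: comm_mx_sym.
Qed.

Lemma hermitian_bell_sum_diff x1 x2 :
  p \is Num.real -> Defs.hermitian a1 -> Defs.hermitian a2 ->
  Defs.hermitian x1 -> Defs.hermitian x2 ->
  comm_mx x1 a1 -> comm_mx x2 a1 -> comm_mx x1 a2 -> comm_mx x2 a2 ->
  Defs.hermitian (bell_op p a1 a2 (x1 + x2) (x1 - x2)).
Proof.
move=> pR ha1 ha2 hx1 hx2 *; apply: hermitian_bell_op => //;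
  first [exact: hermitianD | exact: hermitianB | solve_comm_mx].
Qed.

Lemma expect_bell_op (rho : 'M[C]_N) x1 x2 :
  expect rho (bell_op p a1 a2 (x1 + x2) (x1 - x2)) =
  Itilde p (expect rho (a1 *m x1)) (expect rho (a1 *m x2))
           (expect rho (a2 *m x1)) (expect rho (a2 *m x2)).
Proof.
by rewrite /bell_op /Itilde !mulmxDr mulmxN !(expectD, expectZ, expectN) addrA.
Qed.

End BellOperator.

Section MatrixWords.
Variables (R : pzRingType) (n : nat).
Implicit Types X A Y : 'M[R]_n.

Lemma mulmx_commA {X A Y} : comm_mx X A -> X *m (A *m Y) = A *m (X *m Y).
Proof. by move=> cXA; rewrite mulmxA cXA -mulmxA. Qed.

Lemma mulmx_anticommA {X A Y} :
  X *m A = - (A *m X) -> X *m (A *m Y) = - (A *m (X *m Y)).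
Proof. by move=> aXA; rewrite mulmxA aXA mulNmx -mulmxA. Qed.

Lemma mulmx_involKA {A Y} : A *m A = 1%:M -> A *m (A *m Y) = Y.
Proof. by move=> A2; rewrite mulmxA A2 mul1mx. Qed.

End MatrixWords.

Lemma sqr_sub_sqrV_ge0 (R : numFieldType) (p : R) : 1 <= p -> 0 <= p ^+ 2 - p^-1 ^+ 2.
Proof.
move=> p_ge1; have p_gt0 : 0 < p by apply: lt_le_trans ltr01 p_ge1.
rewrite subr_ge0; apply: (@le_trans _ _ 1); last exact: exprn_ege1.
by apply: exprn_ile1; [rewrite invr_ge0 ltW | rewrite invf_le1].
Qed.

Section KeyInequality.
Variables (C : numClosedFieldType) (N : nat) (rho : 'M[C]_N).
Hypothesis rho_density : density rho.
Local Notation E := (expect rho).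
Variables a1 a2 P M G1 G2 : 'M[C]_N.
Hypotheses (ha1 : Defs.hermitian a1) (ha2 : Defs.hermitian a2)
  (hP : Defs.hermitian P) (hM : Defs.hermitian M)
  (hG1 : Defs.hermitian G1) (hG2 : Defs.hermitian G2).
Hypotheses (a1_invol : a1 *m a1 = 1%:M) (a2_invol : a2 *m a2 = 1%:M).
Hypotheses (P_a1 : comm_mx P a1) (P_a2 : comm_mx P a2)
  (M_a1 : comm_mx M a1) (M_a2 : comm_mx M a2)
  (G1_a1 : comm_mx G1 a1) (G1_a2 : comm_mx G1 a2)
  (G2_a1 : comm_mx G2 a1) (G2_a2 : comm_mx G2 a2).
Hypotheses (M_P : M *m P = - (P *m M)) (G2_G1 : G2 *m G1 = - (G1 *m G2)).
Hypotheses (G1_P : comm_mx G1 P) (G1_M : comm_mx G1 M)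
  (G2_P : comm_mx G2 P) (G2_M : comm_mx G2 M).
Variable p : C.
Hypothesis p_ge1 : 1 <= p.

Let p_real : p \is Num.real. Proof. exact: ger1_real. Qed.

Local Notation Z := (bell_op p a1 a2 (P + G1) (M + G2)).
Local Notation bound := ((1 + p ^+ 2) *
  (E (P *m P) + E (M *m M) + p ^+ 2 * E (G1 *m G1) + E (G2 *m G2))).

(* Here v = u^* = u^-1.  The weights in zeta and omega make Q^* Q reproduce all
   cross terms of bound - Z^2; the two kappa-terms then raise the coefficients
   of <M^2> and <G2^2> in Q^* Q to p^2, and kappa >= 0 because p >= 1. *)
Lemma bell_op_sos :
  let q := p^-1 in
  let u := a1 *m a2 in let v := a2 *m a1 in
  let zeta := (2^-1 * (p - q)) *: u - (2^-1 * (p + q)) *: v in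
  let omega := (2^-1 * (p - q)) *: u + (2^-1 * (p + q)) *: v in
  let Q := - P + zeta *m M + p ^+ 2 *: G1 + omega *m G2 in
  let kappa := 4^-1 * (p ^+ 2 - q ^+ 2) in
  E (Z *m Z) + E (adjmx Q *m Q)
  + kappa * E (adjmx ((u + v) *m M) *m ((u + v) *m M))
  + kappa * E (adjmx ((u - v) *m G2) *m ((u - v) *m G2))
  = bound.
Proof.
move=> q u v zeta omega Q kappa.
rewrite /Q /zeta /omega /u /v /kappa /q /bell_op.
have p_neq0 : p != 0 by rewrite gt_eqF // (lt_le_trans ltr01 p_ge1).
have adjmxZ_real k (X : 'M[C]_N) : k \is Num.real -> adjmx (k *: X) = k *: adjmx X.
  by move=> kR; rewrite adjmxZ conj_Creal.
have half_real : 2^-1 \is @Num.real C by rewrite rpredV rpred_nat.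
have pV_real : p^-1 \is Num.real by rewrite rpredV.
have r1 : 2^-1 * (p - p^-1) \is Num.real by rewrite rpredM ?rpredB.
have r2 : 2^-1 * (p + p^-1) \is Num.real by rewrite rpredM ?rpredD.
have r3 : p ^+ 2 \is Num.real by rewrite rpredX.
rewrite !(adjmxD, adjmxN, adjmxM, adjmxZ_real _ _ r1, adjmxZ_real _ _ r2,
  adjmxZ_real _ _ r3, ha1, ha2, hP, hM, hG1, hG2).
rewrite !(mulmxDl, mulmxDr) !(mulNmx, mulmxN, opprK) -!(scalemxAl, scalemxAr) -!mulmxA.
do 6 rewrite ?(P_a1, P_a2, M_a1, M_a2, G1_a1, G1_a2, G2_a1, G2_a2,
               G1_P, G1_M, G2_P, G2_M, M_P, G2_G1, a1_invol, a2_invol)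
  ?(mulmx_commA P_a1, mulmx_commA P_a2, mulmx_commA M_a1, mulmx_commA M_a2,
    mulmx_commA G1_a1, mulmx_commA G1_a2, mulmx_commA G2_a1, mulmx_commA G2_a2,
    mulmx_commA G1_P, mulmx_commA G1_M, mulmx_commA G2_P, mulmx_commA G2_M,
    mulmx_anticommA M_P, mulmx_anticommA G2_G1,
    mulmx_involKA a1_invol, mulmx_involKA a2_invol)
  ?(mulNmx, mulmxN, opprK, mul1mx, mulmx1, scalerN, scaleNr, mulmxDl, mulmxDr)
  -?mulmxA.
rewrite !(expectD, expectN, expectZ).
by field.
Qed.

Lemma expect_bell_op_sqr_le : E Z ^+ 2 <= bound.
Proof.
have hZ : Defs.hermitian Z.
  by apply: hermitian_bell_op => //; first [exact: hermitianD | solve_comm_mx].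
apply: le_trans (expect_sqr_le rho_density hZ) _.
have := bell_op_sos; rewrite /= => <-.
have psd := expect_adjmx_mul_ge0 rho_density.
by rewrite -2![leRHS]addrA lerDl ?addr_ge0 ?mulr_ge0 ?psd ?invr_ge0 ?sqr_sub_sqrV_ge0.
Qed.

End KeyInequality.

Section BellPair.
Variables (C : numClosedFieldType) (N : nat) (rho : 'M[C]_N).
Hypothesis rho_density : density rho.
Local Notation E := (expect rho).
Variables a1 a2 x1 x2 y1 y2 : 'M[C]_N.
Hypotheses (ha1 : Defs.hermitian a1) (ha2 : Defs.hermitian a2)
  (hx1 : Defs.hermitian x1) (hx2 : Defs.hermitian x2)
  (hy1 : Defs.hermitian y1) (hy2 : Defs.hermitian y2).
Hypotheses (a1_invol : a1 *m a1 = 1%:M) (a2_invol : a2 *m a2 = 1%:M)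
  (x1_invol : x1 *m x1 = 1%:M) (x2_invol : x2 *m x2 = 1%:M)
  (y1_invol : y1 *m y1 = 1%:M) (y2_invol : y2 *m y2 = 1%:M).
Hypotheses (x1_a1 : comm_mx x1 a1) (x1_a2 : comm_mx x1 a2)
  (x2_a1 : comm_mx x2 a1) (x2_a2 : comm_mx x2 a2)
  (y1_a1 : comm_mx y1 a1) (y1_a2 : comm_mx y1 a2)
  (y2_a1 : comm_mx y2 a1) (y2_a2 : comm_mx y2 a2)
  (y1_x1 : comm_mx y1 x1) (y1_x2 : comm_mx y1 x2)
  (y2_x1 : comm_mx y2 x1) (y2_x2 : comm_mx y2 x2).
Variable p : C.
Hypothesis p_ge1 : 1 <= p.

Local Notation Ix := (E (bell_op p a1 a2 (x1 + x2) (x1 - x2))).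
Local Notation Iy := (E (bell_op p a1 a2 (y1 + y2) (y1 - y2))).

Let p_real : p \is Num.real. Proof. exact: ger1_real. Qed.

Let Ix_real : Ix \is Num.real.
Proof. exact/(expect_real rho_density)/hermitian_bell_sum_diff. Qed.

Let Iy_real : Iy \is Num.real.
Proof. exact/(expect_real rho_density)/hermitian_bell_sum_diff. Qed.

Lemma bell_pair_sqr_le c d : c \is Num.real -> d \is Num.real ->
  (c * Ix + d * Iy) ^+ 2 <= (1 + p ^+ 2) * (4 * c ^+ 2
    + p ^+ 2 * (d ^+ 2 * E ((y1 + y2) *m (y1 + y2)))
    + d ^+ 2 * E ((y1 - y2) *m (y1 - y2))).
Proof.
move=> c_real d_real.
have sqrZ k (X : 'M[C]_N) : E ((k *: X) *m (k *: X)) = k ^+ 2 * E (X *m X).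
  by rewrite -scalemxAl -scalemxAr scalerA expectZ expr2.
have -> : 4 * c ^+ 2 = E ((c *: (x1 + x2)) *m (c *: (x1 + x2)))
                       + E ((c *: (x1 - x2)) *m (c *: (x1 - x2))).
  by rewrite !sqrZ -mulrDr expect_sum_diff_sqr // mulrC.
rewrite -(sqrZ d (y1 + y2)) -(sqrZ d (y1 - y2)).
have -> : c * Ix + d * Iy = E (bell_op p a1 a2 (c *: (x1 + x2) + d *: (y1 + y2))
                                        (c *: (x1 - x2) + d *: (y1 - y2))).
  by rewrite [in RHS]bell_opD !bell_opZ [in RHS]expectD !expectZ.
apply: (expect_bell_op_sqr_le rho_density) => //.
all: try (apply: anticommZ; exact: anticomm_sum_diff).
all: try (apply: hermitianZ => //; by [apply: hermitianD | apply: hermitianB]).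
all: solve_comm_mx.
Qed.

(* The weights c = p^2 Ix and d = Iy make <Z> equal to the left-hand side. *)
Lemma bell_monogamy : p ^+ 2 * Ix ^+ 2 + Iy ^+ 2 <= 4 * p ^+ 2 * (1 + p ^+ 2).
Proof.
have p2_ge1 : 1 <= p ^+ 2 by exact: exprn_ege1.
have p2_ge0 : 0 <= p ^+ 2 := le_trans ler01 p2_ge1.
have c_real : p ^+ 2 * Ix \is Num.real by rewrite rpredM ?rpredX.
have key := bell_pair_sqr_le c_real Iy_real.
rewrite [X in X ^+ 2](_ : _ = p ^+ 2 * Ix ^+ 2 + Iy ^+ 2) in key; last by ring.
apply: ler_of_sqr_le_mul.
- by apply: addr_ge0; [apply: mulr_ge0 => //|]; rewrite -realEsqr.
- by apply: mulr_ge0; [apply: mulr_ge0 | apply: addr_ge0].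
apply: le_trans key _.
have E_sum := expect_sum_diff_sqr rho_density y1_invol y2_invol.
have E_diff_ge0 := expect_sqr_ge0 rho_density (hermitianB hy1 hy2).
rewrite [leRHS](_ : _ = (1 + p ^+ 2) * (4 * (p ^+ 2 * Ix) ^+ 2
    + p ^+ 2 * Iy ^+ 2 * (E ((y1 + y2) *m (y1 + y2)) + E ((y1 - y2) *m (y1 - y2)))));
  last by rewrite E_sum; ring.
rewrite ler_wpM2l ?addr_ge0 // -addrA lerD2l mulrDr mulrA lerD2l -mulrA.
by apply: ler_peMl => //; rewrite mulr_ge0 // -realEsqr.
Qed.

End BellPair.

Ltac bell_side_condition := first
  [ assumption | solve_comm_mx | apply: hermitianN; assumption
  | rewrite mulNmx mulmxN opprK; assumption ].

Section BellCorrelator.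
Variables (C : numClosedFieldType) (N : nat) (rho : 'M[C]_N).
Hypothesis rho_density : density rho.
Local Notation E := (expect rho).
Variables a1 a2 x1 x2 g : 'M[C]_N.
Hypotheses (ha1 : Defs.hermitian a1) (ha2 : Defs.hermitian a2)
  (hx1 : Defs.hermitian x1) (hx2 : Defs.hermitian x2) (hg : Defs.hermitian g).
Hypotheses (a1_invol : a1 *m a1 = 1%:M) (a2_invol : a2 *m a2 = 1%:M)
  (x1_invol : x1 *m x1 = 1%:M) (x2_invol : x2 *m x2 = 1%:M)
  (g_invol : g *m g = 1%:M).
Hypotheses (x1_a1 : comm_mx x1 a1) (x1_a2 : comm_mx x1 a2)
  (x2_a1 : comm_mx x2 a1) (x2_a2 : comm_mx x2 a2)
  (g_a1 : comm_mx g a1) (g_a2 : comm_mx g a2)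
  (g_x1 : comm_mx g x1) (g_x2 : comm_mx g x2).
Variable p : C.
Hypothesis p_ge1 : 1 <= p.

Local Notation Ix := (E (bell_op p a1 a2 (x1 + x2) (x1 - x2))).

Let p_real : p \is Num.real. Proof. exact: ger1_real. Qed.
Let p_neq0 : p != 0. Proof. by rewrite gt_eqF // (lt_le_trans ltr01 p_ge1). Qed.

Let Ix_real : Ix \is Num.real.
Proof. exact/(expect_real rho_density)/hermitian_bell_sum_diff. Qed.

Let expect_double_sqr : E ((g + g) *m (g + g)) = 4.
Proof. by rewrite mulmxDl !mulmxDr g_invol !expectD (expect1 rho_density); ring. Qed.

Let bound_ge0 : 0 <= 4 * (1 + p ^+ 2).
Proof. by rewrite mulr_ge0 ?addr_ge0 ?ler0n ?exprn_ge0 // (le_trans ler01 p_ge1). Qed.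

(* Bell pair (g, g): the G2 part vanishes and G1 = (4 <a1 g> / p) g. *)
Lemma bell_correlator1_bound : Ix ^+ 2 + 4 * E (a1 *m g) ^+ 2 <= 4 * (1 + p ^+ 2).
Proof.
set m := E (a1 *m g).
have m_real : m \is Num.real.
  by apply: (expect_real rho_density); apply: hermitianM => //; solve_comm_mx.
have d_real : 2 * m / p \is Num.real by rewrite rpredM ?rpredV ?rpredM ?rpred_nat.
have key : (Ix * Ix + 2 * m / p * E (bell_op p a1 a2 (g + g) (g - g))) ^+ 2
    <= (1 + p ^+ 2) * (4 * Ix ^+ 2
        + p ^+ 2 * ((2 * m / p) ^+ 2 * E ((g + g) *m (g + g)))
        + (2 * m / p) ^+ 2 * E ((g - g) *m (g - g))).
  by apply: bell_pair_sqr_le; bell_side_condition.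
have Iy_eq : E (bell_op p a1 a2 (g + g) (g - g)) = p * (2 * m).
  by rewrite /bell_op subrr mulmx0 addr0 mulmxDr expectZ expectD -/m; ring.
rewrite Iy_eq expect_double_sqr subrr mulmx0 expect0 in key.
rewrite [X in X ^+ 2](_ : _ = Ix ^+ 2 + 4 * m ^+ 2) in key; last by field.
rewrite [leRHS](_ : _ = 4 * (1 + p ^+ 2) * (Ix ^+ 2 + 4 * m ^+ 2)) in key;
  last by field.
apply: ler_of_sqr_le_mul bound_ge0 key.
by apply: addr_ge0; [|apply: mulr_ge0]; rewrite -?realEsqr.
Qed.

(* Bell pair (g, -g): the G1 part vanishes and G2 = 4 <a2 g> g. *)
Lemma bell_correlator2_bound : Ix ^+ 2 + 4 * E (a2 *m g) ^+ 2 <= 4 * (1 + p ^+ 2).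
Proof.
set m := E (a2 *m g).
have m_real : m \is Num.real.
  by apply: (expect_real rho_density); apply: hermitianM => //; solve_comm_mx.
have d_real : 2 * m \is Num.real by rewrite rpredM ?rpred_nat.
have key : (Ix * Ix + 2 * m * E (bell_op p a1 a2 (g + - g) (g - - g))) ^+ 2
    <= (1 + p ^+ 2) * (4 * Ix ^+ 2
        + p ^+ 2 * ((2 * m) ^+ 2 * E ((g + - g) *m (g + - g)))
        + (2 * m) ^+ 2 * E ((g - - g) *m (g - - g))).
  by apply: bell_pair_sqr_le; bell_side_condition.
have Iy_eq : E (bell_op p a1 a2 (g + - g) (g - - g)) = 2 * m.
  by rewrite /bell_op subrr opprK mulmx0 scaler0 add0r mulmxDr expectD -/m; ring.
rewrite Iy_eq opprK expect_double_sqr subrr mul0mx expect0 in key.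
rewrite [X in X ^+ 2](_ : _ = Ix ^+ 2 + 4 * m ^+ 2) in key; last by ring.
rewrite [leRHS](_ : _ = 4 * (1 + p ^+ 2) * (Ix ^+ 2 + 4 * m ^+ 2)) in key;
  last by ring.
apply: ler_of_sqr_le_mul bound_ge0 key.
by apply: addr_ge0; [|apply: mulr_ge0]; rewrite -?realEsqr.
Qed.

End BellCorrelator.

Section Tripartite.
Variables (C : numClosedFieldType) (dA dB dC : nat).

Definition liftA (X : 'M[C]_dA) : 'M[C]_(dA * dB * dC) :=
  (X *t (1%:M : 'M_dB)) *t (1%:M : 'M_dC).
Definition liftB (Y : 'M[C]_dB) : 'M[C]_(dA * dB * dC) :=
  ((1%:M : 'M_dA) *t Y) *t (1%:M : 'M_dC).
Definition liftC (Z : 'M[C]_dC) : 'M[C]_(dA * dB * dC) :=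
  ((1%:M : 'M_dA) *t (1%:M : 'M_dB)) *t Z.

Lemma hermitian_liftA X : dichotomic X -> Defs.hermitian (liftA X).
Proof.
by case=> hX _; apply: hermitian_tens; first apply: hermitian_tens;
  try exact: hermitian1.
Qed.

Lemma hermitian_liftB Y : dichotomic Y -> Defs.hermitian (liftB Y).
Proof.
by case=> hY _; apply: hermitian_tens; first apply: hermitian_tens;
  try exact: hermitian1.
Qed.

Lemma hermitian_liftC Z : dichotomic Z -> Defs.hermitian (liftC Z).
Proof.
by case=> hZ _; apply: hermitian_tens; first apply: hermitian_tens;
  try exact: hermitian1.
Qed.

Lemma liftA_involutive X : dichotomic X -> liftA X *m liftA X = 1%:M.
Proof.
move/dichotomic_involutive=> X2.
by apply: tensmx_involutive; first apply: tensmx_involutive; rewrite ?mulmx1.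
Qed.

Lemma liftB_involutive Y : dichotomic Y -> liftB Y *m liftB Y = 1%:M.
Proof.
move/dichotomic_involutive=> Y2.
by apply: tensmx_involutive; first apply: tensmx_involutive; rewrite ?mulmx1.
Qed.

Lemma liftC_involutive Z : dichotomic Z -> liftC Z *m liftC Z = 1%:M.
Proof.
move/dichotomic_involutive=> Z2.
by apply: tensmx_involutive; first apply: tensmx_involutive; rewrite ?mulmx1.
Qed.

Lemma comm_liftB_liftA X Y : comm_mx (liftB Y) (liftA X).
Proof. by rewrite /comm_mx /liftA /liftB !tensmx_mul !mulmx1 !mul1mx. Qed.

Lemma comm_liftC_liftA X Z : comm_mx (liftC Z) (liftA X).
Proof. by rewrite /comm_mx /liftA /liftC !tensmx_mul !mulmx1 !mul1mx. Qed.

Lemma comm_liftC_liftB Y Z : comm_mx (liftC Z) (liftB Y).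
Proof. by rewrite /comm_mx /liftB /liftC !tensmx_mul !mulmx1 !mul1mx. Qed.

Variable rho : 'M[C]_(dA * dB * dC).

Lemma corrAB_expect X Y : corrAB rho X Y = expect rho (liftA X *m liftB Y).
Proof. by rewrite /corrAB /expect /liftA /liftB !tensmx_mul !mulmx1 !mul1mx. Qed.

Lemma corrAC_expect X Z : corrAC rho X Z = expect rho (liftA X *m liftC Z).
Proof. by rewrite /corrAC /expect /liftA /liftC !tensmx_mul !mulmx1 !mul1mx. Qed.

Lemma Itilde_corrAB alpha X1 X2 Y1 Y2 :
  Itilde alpha (corrAB rho X1 Y1) (corrAB rho X1 Y2) (corrAB rho X2 Y1) (corrAB rho X2 Y2)
  = expect rho (bell_op alpha (liftA X1) (liftA X2)
                  (liftB Y1 + liftB Y2) (liftB Y1 - liftB Y2)).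
Proof. by rewrite !corrAB_expect expect_bell_op. Qed.

Lemma Itilde_corrAC alpha X1 X2 Z1 Z2 :
  Itilde alpha (corrAC rho X1 Z1) (corrAC rho X1 Z2) (corrAC rho X2 Z1) (corrAC rho X2 Z2)
  = expect rho (bell_op alpha (liftA X1) (liftA X2)
                  (liftC Z1 + liftC Z2) (liftC Z1 - liftC Z2)).
Proof. by rewrite !corrAC_expect expect_bell_op. Qed.

End Tripartite.

#[local] Hint Resolve hermitian_liftA hermitian_liftB hermitian_liftC : core.
#[local] Hint Resolve liftA_involutive liftB_involutive liftC_involutive : core.
#[local] Hint Resolve comm_liftB_liftA comm_liftC_liftA comm_liftC_liftB comm_mx_sym : core.

Theorem theorem3 (C : numClosedFieldType) (dA dB dC : nat)
  (rho : 'M[C]_(dA * dB * dC))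
  (A1 A2 : 'M[C]_dA) (B1 B2 : 'M[C]_dB) (C1 C2 : 'M[C]_dC) (alpha : C) :
  density rho ->
  dichotomic A1 -> dichotomic A2 ->
  dichotomic B1 -> dichotomic B2 ->
  dichotomic C1 -> dichotomic C2 ->
  1 <= alpha ->
  let IAB := Itilde alpha (corrAB rho A1 B1) (corrAB rho A1 B2)
                          (corrAB rho A2 B1) (corrAB rho A2 B2) in
  let IAC := Itilde alpha (corrAC (dB:=dB) rho A1 C1) (corrAC (dB:=dB) rho A1 C2)
                          (corrAC (dB:=dB) rho A2 C1) (corrAC (dB:=dB) rho A2 C2) in
  alpha ^+ 2 * Num.max (IAB ^+ 2) (IAC ^+ 2) + Num.min (IAB ^+ 2) (IAC ^+ 2)
    <= 4 * alpha ^+ 2 * (1 + alpha ^+ 2)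
  /\ (forall (X : 'M[C]_dA) (Z : 'M[C]_dC),
        (X = A1 \/ X = A2) -> (Z = C1 \/ Z = C2) ->
        IAB ^+ 2 + 4 * (corrAC (dB:=dB) rho X Z) ^+ 2 <= 4 * (1 + alpha ^+ 2)).
Proof.
move=> rho_density dA1 dA2 dB1 dB2 dC1 dC2 alpha_ge1 IAB IAC.
rewrite /IAB /IAC Itilde_corrAB Itilde_corrAC; split.
  rewrite /Num.max /Num.min /Order.max /Order.min.
  by case: ifP => _; apply: bell_monogamy; auto.
move=> X Z hX hZ; have dZ : dichotomic Z by case: hZ => ->.
rewrite corrAC_expect.
by case: hX => ->; [apply: bell_correlator1_bound | apply: bell_correlator2_bound]; auto.
Qed.
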